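(* Every fractal matrix (with parameters $q\ge2$, $m\ge1$) is non-expandable: no bang of it has more columns than it has.
   Context: A subcube of ${\bf Z}_q^n$ is obtained by fixing some coordinates and letting the others run through ${\bf Z}_q$; its star pattern is the vector over ${\bf Z}_q\cup\{*\}$ with fixed values in fixed coordinates and $*$ in free ones. The star matrix of a partition of ${\bf Z}_q^n$ into subcubes is the matrix whose rows are the star patterns of the subcubes; it is A-primitive if no column consists only of $*$. Fractal matrices: $M_{q,0}$ has one row and zero columns; for $m\ge1$, $M_{q,m}$ consists of $q$ horizontal blocks indexed by $a=0,\dots,q-1$, each with $q^{m-1}$ rows; its first column has entry $a$ in every row of block $a$; its remaining columns are divided into $q$ vertical stripes of width equal to the number of columns of $M_{q,m-1}$, and in block $a$ the $a$-th stripe is a copy of $M_{q,m-1}$ while other stripes of block $a$ are all $*$. A fractal matrix is any matrix obtained from some $M_{q,m}$ by permuting rows and columns; it is an A-primitive star matrix of a partition into $q^m$ subcubes of equal dimension. Bang: given an A-primitive star matrix $M$ of a partition into subcubes of equal dimension, a column $i$ and $a\in{\bf Z}_q$, the bang of $M$ at $(i,a)$ is obtained by: (1) deleting column $i$; (2) deleting all rows having in column $i$ a value of ${\bf Z}_q$ different from $a$; (3) replacing each row having $a$ in column $i$ by $q$ identical copies; (4) for each such group of $q$ copies, adjoining a new column having the values $0,1,\dots,q-1$ (each once) in the rows of that group and $*$ in all other rows; (5) deleting all columns consisting only of $*$. $M$ is non-expandable if no bang of $M$ has more columns than $M$. *)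

(* Star matrices are represented concretely as lists of rows;
   an entry is [Some v] (a fixed value v, meant to lie in {0,..,q-1} = Z_q)
   or [None] (the star symbol).  A matrix is carried together with its number of
   columns [c] (needed e.g. for M_{q,0}, which has one row and zero columns). *)
From mathcomp Require Import all_boot.
Set Implicit Arguments. Unset Strict Implicit. Unset Printing Implicit Defensive.

Definition entry := option nat.
Definition smatrix := seq (seq entry).

Fixpoint fractal (q m : nat) : nat * smatrix :=
  match m with
  | 0 => (0, [:: [::]])
  | m'.+1 =>
    let c := (fractal q m').1 in
    let M := (fractal q m').2 in
    (1 + q * c,
     flatten [seq [seq Some a :: flatten [seq (if b == a then r else nseq c None)
                                         | b <- iota 0 q]
                  | r <- M]
             | a <- iota 0 q])
  end.

Definition permcols (p : seq nat) (M : smatrix) : smatrix :=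
  [seq [seq nth None r j | j <- p] | r <- M].

Definition is_fractal_from (q m c : nat) (M : smatrix) : Prop :=
  (fractal q m).1 = c /\
  exists p : seq nat, perm_eq p (iota 0 c) /\
                      perm_eq M (permcols p (fractal q m).2).

Definition is_fractal (q c : nat) (M : smatrix) : Prop :=
  exists m, is_fractal_from q m c M.

Definition delcol (i : nat) (r : seq entry) : seq entry :=
  take i r ++ drop i.+1 r.

Definition is_a_row (i a : nat) (r : seq entry) : bool := nth None r i == Some a.

Definition bang (q c : nat) (M : smatrix) (i a : nat) : nat * smatrix :=
  let M1 := [seq r <- M | (nth None r i == None) || (nth None r i == Some a)] in
  (* k = number of rows having a in column i = number of new columns *)
  let k := count (is_a_row i a) M1 in
  (* (1),(3),(4): delete column i, replace each a-row (the t-th one) by q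
     copies, the v-th copy getting value v in new column t, star elsewhere *)
  let M2 := flatten
    [seq (let r := nth [::] M1 p in
          if is_a_row i a r then
            let t := count (is_a_row i a) (take p M1) in
            [seq delcol i r ++ [seq (if j == t then Some v else None) | j <- iota 0 k]
            | v <- iota 0 q]
          else [:: delcol i r ++ nseq k None])
    | p <- iota 0 (size M1)] in
  let keep := [seq j <- iota 0 (c.-1 + k) | has (fun r => nth None r j != None) M2] in
  (size keep, [seq [seq nth None r j | j <- keep] | r <- M2]).

Definition non_expandable (q c : nat) (M : smatrix) : Prop :=
  forall i a, i < c -> a < q -> (bang q c M i a).1 <= c.

From mathcomp Require Import all_boot zify.
Set Implicit Arguments. Unset Strict Implicit. Unset Printing Implicit Defensive.

(* A bang at (i, a) adds one column per row carrying a in column i, and the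
   old columns it keeps are among the columns j <> i that carry a value in
   some row compatible with (i, a) (a star or a in column i).  The sum of
   these two numbers, [bang_estimate], does not change under permutations of
   rows and columns, and for M_{q,m} it is at most its number c_m of columns,
   by induction on m, where c_{m+1} = 1 + q c_m.  At the first column of
   M_{q,m+1} only block a survives, with q^m rows and values only in stripe a,
   and q^m + c_m = 1 + q c_m.  At a column of stripe b, the blocks other than b
   contribute at most 1 + (q-1) c_m columns and no a-row, while block b
   contributes the estimate of M_{q,m} at the corresponding column. *)

Lemma sub_in_count (T : eqType) (a1 a2 : pred T) (s : seq T) :
  {in s, subpred a1 a2} -> count a1 s <= count a2 s.
Proof.
move=> sub12; rewrite (@eq_in_count _ a1 (predI a1 (mem s))) => [|x xs]; last first.
  by rewrite /= xs andbT.
by apply: sub_count => x /andP[a1x xs]; apply: sub12.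
Qed.

Lemma count_pred0_in (T : eqType) (P : pred T) (s : seq T) :
  {in s, forall x, ~~ P x} -> count P s = 0.
Proof. by move=> notP; apply/eqP; rewrite eqn0Ngt -has_count; apply/hasPn. Qed.

Lemma nth_flatten_uniform (T : Type) (x0 : T) (ss : seq (seq T)) n b j :
  all (fun s => size s == n) ss -> b < size ss -> j < n ->
  nth x0 (flatten ss) (b * n + j) = nth x0 (nth [::] ss b) j.
Proof.
elim: ss b => [|s ss IH] [|b] //= /andP[/eqP size_s size_ss] lt_b lt_j.
  by rewrite nth_cat size_s lt_j.
by rewrite nth_cat size_s mulSn -addnA ltnNge leq_addr addKn IH.
Qed.

Lemma iota_mul q c : iota 0 (q * c) = flatten [seq iota (b * c) c | b <- iota 0 q].
Proof.
elim: q => [|q IH] //.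
by rewrite mulSnr iotaD -addn1 iotaD map_cat flatten_cat -IH /= cats0.
Qed.

Lemma count_iota_blocks (P : pred nat) q c :
  count P (iota 0 (1 + q * c)) =
  P 0 + sumn [seq count (fun j => P (1 + (b * c + j))) (iota 0 c) | b <- iota 0 q].
Proof.
rewrite iotaD count_cat /= addn0 add0n -[iota 1 _]/(iota (1 + 0) _) iotaDl count_map iota_mul.
rewrite count_flatten -map_comp; congr (_ + sumn _); apply: eq_map => b /=.
by rewrite -{1}[b * c]addn0 iotaDl count_map.
Qed.

Lemma sumn_iota_le_but_one (f : nat -> nat) q b0 x : b0 < q ->
  (forall b, b < q -> b != b0 -> f b <= x) ->
  sumn [seq f b | b <- iota 0 q] <= q.-1 * x + f b0.
Proof.
move=> lt_b0 le_fx.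
have b0_in : b0 \in iota 0 q by rewrite mem_iota.
rewrite sumnE big_map (bigD1_seq b0) ?iota_uniq //= addnC leq_add2r.
have -> : q.-1 = count (predC1 b0) (iota 0 q).
  have := count_predC (pred1 b0) (iota 0 q).
  by rewrite count_uniq_mem ?iota_uniq // b0_in size_iota => /(congr1 predn) <-.
rewrite mulnC -iter_addn_0 -big_const_seq [leqLHS]big_seq_cond [leqRHS]big_seq_cond.
by apply: leq_sum => b /andP[]; rewrite mem_iota => /andP[_ lt_b] ne_b; apply: le_fx.
Qed.

Lemma count_bump (P : pred nat) i c : i < c ->
  count (P \o bump i) (iota 0 c.-1) = count (predI P (predC1 i)) (iota 0 c).
Proof.
move=> lt_ic; have [n ->] : exists n, c = (i + n).+1 by exists (c - i.+1); lia.
rewrite -pred_Sn -addnS !iotaD !count_cat add0n [iota i _.+1]/= /= eqxx andbF add0n.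
rewrite -add1n iotaDl count_map.
congr (_ + _); apply: eq_in_count => j; rewrite mem_iota /bump /=.
  by move=> lt_ji; rewrite leqNgt lt_ji neq_ltn lt_ji andbT.
by case/andP=> le_ij _; rewrite le_ij add1n gtn_eqF ?andbT.
Qed.

Definition compatible (i a : nat) (r : seq entry) : bool :=
  (nth None r i == None) || (nth None r i == Some a).

Definition live_col (M : smatrix) (i a j : nat) : bool :=
  has (fun r => compatible i a r && (nth None r j != None)) M.

Definition bang_estimate (M : smatrix) (c i a : nat) : nat :=
  count (predI (live_col M i a) (predC1 i)) (iota 0 c) + count (is_a_row i a) M.

Lemma size_delcol (r : seq entry) i : i < size r -> size (delcol i r) = (size r).-1.
Proof. by move=> lt_i; rewrite size_cat size_drop size_takel; lia. Qed.

Lemma nth_delcol (r : seq entry) i j : i < size r ->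
  nth None (delcol i r) j = nth None r (bump i j).
Proof.
move=> lt_i; rewrite nth_cat size_takel ?(ltnW lt_i) // /bump.
case: ltnP => [lt_ji | le_ij]; first by rewrite nth_take // leqNgt lt_ji.
by rewrite nth_drop; congr nth; lia.
Qed.

Lemma bang_cols_le_estimate q c (M : smatrix) i a :
  i < c -> {in M, forall r, size r = c} -> (bang q c M i a).1 <= bang_estimate M c i a.
Proof.
move=> lt_ic size_M; rewrite /bang /= size_filter iotaD count_cat add0n.
set M1 := filter _ M; set k := count _ M1; set M2 := flatten _.
have M2_rows r2 : r2 \in M2 -> exists2 r, r \in M1 & exists s, r2 = delcol i r ++ s.
  case/flattenP=> _ /mapP[p p_in ->]; set r := nth [::] M1 p.
  have r_in : r \in M1 by apply: mem_nth; rewrite mem_iota in p_in.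
  by case: ifP => _ => [/mapP[v _ ->] | /[1!inE] /eqP ->]; exists r => //; eexists.
apply: leq_add.
- rewrite -count_bump //; apply: sub_in_count => j; rewrite mem_iota add0n => /andP[_ lt_j].
  case/hasP=> _ /M2_rows[r r_in [s ->]]; move: r_in; rewrite mem_filter => /andP[compat_r r_in].
  rewrite /= nth_cat size_delcol size_M // lt_j nth_delcol ?size_M // => fixed_j.
  by apply/hasP; exists r; rewrite // /compatible compat_r.
- rewrite (leq_trans (count_size _ _)) // size_iota /k count_filter.
  by apply: sub_count => r /andP[].
Qed.

Lemma bang_estimate_perm_eq (M M' : smatrix) c i a :
  perm_eq M M' -> bang_estimate M c i a = bang_estimate M' c i a.
Proof.
move=> eqMM'; rewrite /bang_estimate (permP eqMM'); congr (_ + _).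
by apply: eq_count => j; rewrite /= /live_col (perm_has _ eqMM').
Qed.

Lemma bang_estimate_permcols (p : seq nat) (M : smatrix) c i a :
  perm_eq p (iota 0 c) -> i < c ->
  bang_estimate (permcols p M) c i a = bang_estimate M c (nth 0 p i) a.
Proof.
move=> p_perm lt_ic.
have size_p : size p = c by rewrite (perm_size p_perm) size_iota.
have uniq_p : uniq p by rewrite (perm_uniq p_perm) iota_uniq.
have nth_permcols (r : seq entry) j : j < c ->
    nth None [seq nth None r j' | j' <- p] j = nth None r (nth 0 p j).
  by move=> lt_jc; rewrite (nth_map 0) ?size_p.
rewrite /bang_estimate /permcols count_map; congr (_ + _); last first.
  by apply: eq_count => r; rewrite /= /is_a_row nth_permcols.
transitivity (count (predI (live_col M (nth 0 p i) a) (predC1 (nth 0 p i)))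
                    (mkseq (nth 0 p) c)); last by rewrite -{1}size_p mkseq_nth (permP p_perm).
rewrite count_map; apply: eq_in_count => j; rewrite mem_iota add0n => lt_jc /=.
rewrite (nth_uniq 0) ?size_p // /live_col has_map; congr (_ && _).
by apply: eq_has => r; rewrite /= /compatible !nth_permcols.
Qed.

Definition fractal_row (q c a : nat) (r : seq entry) : seq entry :=
  Some a :: flatten [seq (if b == a then r else nseq c None) | b <- iota 0 q].

Lemma fractalS q m : fractal q m.+1 =
  (1 + q * (fractal q m).1,
   flatten [seq [seq fractal_row q (fractal q m).1 a r | r <- (fractal q m).2]
           | a <- iota 0 q]).
Proof. by []. Qed.

Section FractalRow.

Variables (q c : nat) (r : seq entry).
Hypothesis size_r : size r = c.

Lemma size_fractal_row a : size (fractal_row q c a r) = 1 + q * c.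
Proof.
rewrite /= size_flatten /shape -map_comp sumnE big_map.
rewrite (eq_bigr (fun=> c)) => [|b _]; last by rewrite /= fun_if size_nseq size_r if_same.
by rewrite big_const_seq iter_addn_0 count_predT size_iota mulnC.
Qed.

Lemma nth_fractal_row a b j : b < q -> j < c ->
  nth None (fractal_row q c a r) (1 + (b * c + j)) = if b == a then nth None r j else None.
Proof.
move=> lt_bq lt_jc; rewrite add1n /= nth_flatten_uniform ?size_map ?size_iota //.
  by rewrite (nth_map 0) ?size_iota // nth_iota //; case: ifP; rewrite ?nth_nseq ?if_same.
by apply/allP=> _ /mapP[b' _ ->]; rewrite fun_if size_nseq size_r if_same.
Qed.

End FractalRow.

Lemma size_fractal_rows q m : {in (fractal q m).2, forall r, size r = (fractal q m).1}.
Proof.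
elim: m => [|m IH] r /=; first by rewrite inE => /eqP ->.
by case/flattenP=> _ /mapP[a _ ->] /mapP[r' /IH size_r' ->]; rewrite size_fractal_row.
Qed.

Lemma size_fractal q m : size (fractal q m).2 + (fractal q m).1 = 1 + q * (fractal q m).1.
Proof.
elim: m => [|m IH]; first by rewrite /= muln0.
rewrite fractalS /= size_flatten /shape -map_comp sumnE big_map.
rewrite (eq_bigr (fun=> size (fractal q m).2)) => [|a _]; last by rewrite /= size_map.
rewrite big_const_seq iter_addn_0 count_predT size_iota; lia.
Qed.

Section FractalStep.

Variables q m : nat.
Let c := (fractal q m).1.
Let F := (fractal q m).2.

Lemma mem_fractalS z : z \in (fractal q m.+1).2 ->
  exists2 a, a < q & exists2 r, r \in F & z = fractal_row q c a r.
Proof.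
case/flattenP=> _ /mapP[a a_in ->] /mapP[r r_in ->].
by exists a; [rewrite mem_iota in a_in | exists r].
Qed.

Lemma count_fractalS (P : pred (seq entry)) :
  count P (fractal q m.+1).2 = sumn [seq count (P \o fractal_row q c a) F | a <- iota 0 q].
Proof.
rewrite fractalS count_flatten -map_comp; congr sumn.
by apply: eq_map => a /=; rewrite count_map.
Qed.

Lemma fractal_estimate_head a : a < q ->
  bang_estimate (fractal q m.+1).2 (1 + q * c) 0 a <= 1 + q * c.
Proof.
move=> lt_aq; have size_F : {in F, forall r, size r = c} := @size_fractal_rows q m.
rewrite /bang_estimate count_iota_blocks count_fractalS -(size_fractal q m) -/c -/F.
rewrite /= andbF add0n addnC; apply: leq_add.
- apply: leq_trans (sumn_iota_le_but_one (x := 0) lt_aq _) _ => [a' _ ne_a'a|].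
    by apply/eq_leq/count_pred0_in => r _; rewrite /is_a_row /=.
  by rewrite muln0 add0n count_size.
- apply: leq_trans (sumn_iota_le_but_one (x := 0) lt_aq _) _ => [b lt_bq ne_ba|].
    apply/eq_leq/count_pred0_in => j; rewrite mem_iota add0n => /andP[_ lt_jc] /=.
    apply/negP => /andP[/hasP[_ /mem_fractalS[a' _ [r r_in ->]]] /andP[compat_r fixed_r] _].
    move: compat_r fixed_r; rewrite nth_fractal_row ?size_F // /compatible /= => /eqP[->].
    by rewrite (negbTE ne_ba).
  by rewrite muln0 add0n (leq_trans (count_size _ _)) ?size_iota.
Qed.

Lemma fractal_estimate_stripe a b i : b < q -> i < c -> bang_estimate F c i a <= c ->
  bang_estimate (fractal q m.+1).2 (1 + q * c) (1 + (b * c + i)) a <= 1 + q * c.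
Proof.
move=> lt_bq lt_ic IH; have size_F : {in F, forall r, size r = c} := @size_fractal_rows q m.
rewrite /bang_estimate count_iota_blocks count_fractalS -/c -/F.
set i' := 1 + (b * c + i).
have head_le : predI (live_col (fractal q m.+1).2 i' a) (predC1 i') 0 <= 1 := leq_b1 _.
have live_le : sumn [seq count (fun j => predI (live_col (fractal q m.+1).2 i' a) (predC1 i')
                                              (1 + (b' * c + j))) (iota 0 c) | b' <- iota 0 q]
               <= q.-1 * c + count (predI (live_col F i a) (predC1 i)) (iota 0 c).
  apply: leq_trans (sumn_iota_le_but_one (x := c) lt_bq _) _ => [b' _ _|].
    by rewrite (leq_trans (count_size _ _)) ?size_iota.
  rewrite leq_add2l; apply: sub_in_count => j; rewrite mem_iota add0n => /andP[_ lt_jc].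
  case/andP=> /hasP[_ /mem_fractalS[a' _ [r r_in ->]] /andP[compat_r fixed_r]] ne_ji.
  move: compat_r fixed_r ne_ji; rewrite /compatible !nth_fractal_row ?size_F // /= !eqn_add2l.
  case: (eqVneq b a') => [_ compat_r fixed_r ne_ji | _ _ /eqP //].
  by rewrite ne_ji andbT; apply/hasP; exists r => //; apply/andP.
have rows_le : sumn [seq count (is_a_row i' a \o fractal_row q c a') F | a' <- iota 0 q]
               <= count (is_a_row i a) F.
  apply: leq_trans (sumn_iota_le_but_one (x := 0) lt_bq _) _ => [a' _ ne_a'b|].
    apply/eq_leq/count_pred0_in => r r_in.
    by rewrite /= /is_a_row nth_fractal_row ?size_F // ifN_eqC.
  apply: eq_leq; rewrite muln0 add0n; apply: eq_in_count => r r_in.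
  by rewrite /= /is_a_row nth_fractal_row ?size_F // eqxx.
have mulc : q.-1 * c + c = q * c by rewrite addnC -mulSn prednK // (leq_ltn_trans _ lt_bq).
move: IH; rewrite /bang_estimate; lia.
Qed.

End FractalStep.

Lemma fractal_estimate_le q m i a : a < q -> i < (fractal q m).1 ->
  bang_estimate (fractal q m).2 (fractal q m).1 i a <= (fractal q m).1.
Proof.
move=> lt_aq; elim: m i => [|m IH] [|i] //.
all: have -> : (fractal q m.+1).1 = 1 + q * (fractal q m).1 by [].
  by move=> _; apply: fractal_estimate_head.
set c := (fractal q m).1; rewrite add1n ltnS => lt_i.
have c_pos : 0 < c by case: c lt_i => //; rewrite muln0.
have -> : i.+1 = 1 + (i %/ c * c + i %% c) by rewrite -divn_eq add1n.
by apply: fractal_estimate_stripe; rewrite ?ltn_divLR ?ltn_pmod // IH ?ltn_pmod.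
Qed.

Theorem mainTheorem13 (q m c : nat) (M : smatrix) :
  2 <= q -> 1 <= m -> is_fractal_from q m c M -> non_expandable q c M.
Proof.
(* The estimate bound holds for every q and m. *)
move=> _ _ [<- [p [p_perm M_perm]]] i a lt_ic lt_aq.
have size_M : {in M, forall r, size r = (fractal q m).1}.
  move=> r; rewrite (perm_mem M_perm) => /mapP[r0 _ ->].
  by rewrite size_map (perm_size p_perm) size_iota.
have lt_pi : nth 0 p i < (fractal q m).1.
  have : nth 0 p i \in p by rewrite mem_nth // (perm_size p_perm) size_iota.
  by rewrite (perm_mem p_perm) mem_iota.
apply: leq_trans (bang_cols_le_estimate q a lt_ic size_M) _.
rewrite (bang_estimate_perm_eq _ _ _ M_perm) bang_estimate_permcols //.
exact: fractal_estimate_le.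
Qed.
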